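(* Let $n\ge 3$, let the sites of an $n$-qubit chain be partitioned into nonempty consecutive intervals $L=\{1,\dots,a\}$, $C=\{a+1,\dots,a+k\}$, $R=\{a+k+1,\dots,n\}$, and let $W\in\mathrm{Sp}(2n,\mathbb{Z}_2)$ be the symplectic matrix of a Clifford unitary $U$ on the chain. Then $W$ satisfies the left wall condition around $C$ if and only if it satisfies the right wall condition around $C$. (All walls in Clifford circuits are two-sided.)
   Context: Pauli operators modulo phases are identified with $\mathbb{Z}_2^{2n}$ via $(p_1,q_1,\dots,p_n,q_n)\mapsto X^{p_1}Z^{q_1}\otimes\cdots\otimes X^{p_n}Z^{q_n}$; the symplectic form is $J=\bigoplus_{i=1}^n\begin{pmatrix}0&1\\1&0\end{pmatrix}$ (two Paulis commute iff $b^TJb'=0$), $\mathrm{Sp}(2n,\mathbb{Z}_2)=\{S:SJS^T=J\}$, and a Clifford unitary $U$ induces $W$ with $UP_bU^\dagger\propto P_{Wb}$. For a set of sites $S$, $V_S$ is the subspace of vectors supported on $S$, so $\mathbb{Z}_2^{2n}=V_L\oplus V_C\oplus V_R$, vectors written $(l,c,r)$. Left wall condition: for all integers $t\ge1$ and all $l\in V_L$, $W^t(l,0,0)\in V_L\oplus V_C\oplus\{0\}$. Right wall condition: for all integers $t\ge 1$ and all $r\in V_R$, $W^t(0,0,r)\in\{0\}\oplus V_C\oplus V_R$. *)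

From HB Require Import structures.
From mathcomp Require Import all_boot all_order all_algebra.
Set Implicit Arguments. Unset Strict Implicit. Unset Printing Implicit Defensive.
Import GRing.Theory.
Local Open Scope ring_scope.

(* Coordinates of Z_2^{2n}, 0-indexed: coordinate 2i is p_{i+1}, 2i+1 is q_{i+1}.
   Coordinate j belongs to site j./2 (0-indexed site). *)

Definition symJ (n : nat) : 'M['F_2]_(2 * n) :=
  \matrix_(i, j) (if (i./2 == j./2)%N && (i != j :> nat) then 1 else 0).

Definition symplectic (n : nat) (S : 'M['F_2]_(2 * n)) : Prop :=
  S *m symJ n *m S^T = symJ n.

Definition act_pow (n : nat) (W : 'M['F_2]_(2 * n)) (t : nat) (b : 'cV['F_2]_(2 * n)) :=
  iter t (fun x => W *m x) b.

(* Sites: L = {0..a-1}, C = {a..a+k-1}, R = {a+k..n-1} (0-indexed).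
   Coordinate j lies on L iff j./2 < a, on R iff a+k <= j./2. *)
Definition left_wall (n a k : nat) (W : 'M['F_2]_(2 * n)) : Prop :=
  forall t : nat, (1 <= t)%N -> forall l : 'cV['F_2]_(2 * n),
    (forall j : 'I_(2 * n), (a <= j./2)%N -> l j 0 = 0) ->
    forall j : 'I_(2 * n), (a + k <= j./2)%N -> act_pow W t l j 0 = 0.

Definition right_wall (n a k : nat) (W : 'M['F_2]_(2 * n)) : Prop :=
  forall t : nat, (1 <= t)%N -> forall r : 'cV['F_2]_(2 * n),
    (forall j : 'I_(2 * n), (j./2 < a + k)%N -> r j 0 = 0) ->
    forall j : 'I_(2 * n), (j./2 < a)%N -> act_pow W t r j 0 = 0.
Arguments left_wall : clear implicits.
Arguments right_wall : clear implicits.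

From mathcomp Require Import all_boot all_order all_algebra.
From mathcomp Require Import zify.
Import GRing.Theory.
Local Open Scope ring_scope.

(* A symplectic W is invertible with W^-1 = J W^T J, and as Sp(2n, Z_2) is
   finite, for every t > 0 the inverse W^-t is a positive power W^s.  Hence
   W^t = J (W^s)^T J, and since conjugation by J only exchanges the two
   coordinates of each site, the block of W^t from L to R is the transpose of
   the block of W^s from R to L. *)

Lemma iter_mulmx {R : pzRingType} {m p} (M : 'M[R]_m) (B : 'M[R]_(m, p)) t :
  iter t (mulmx M) B = M ^+ t *m B.
Proof. by elim: t => [|t IHt]; rewrite ?expr0 ?mul1mx //= IHt exprS mulmxA. Qed.

Lemma unitmx_finite_order {R : finComUnitRingType} {m} {M : 'M[R]_m} :
  M \in unitmx -> exists2 N, (0 < N)%N & M ^+ N = 1.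
Proof.
move=> Munit; have mulM_inj : injective (@mulmx _ m m m M) := can_inj (mulKmx Munit).
exists (order (mulmx M) 1%:M); first exact: order_gt0.
by rewrite -[_ ^+ _]mulmx1 -iter_mulmx (iter_order mulM_inj).
Qed.

Lemma finite_order_inv_expr {R : pzRingType} {m} {M : 'M[R]_m} {N} t :
  (0 < N)%N -> M ^+ N = 1 -> exists2 s, (0 < s)%N & M ^+ (t + s) = 1.
Proof.
move=> N_gt0 MN1; have t_lt : (t < N * t.+1)%N by rewrite (leq_pmull t.+1 N_gt0).
exists (N * t.+1 - t)%N; first by rewrite subn_gt0.
by rewrite addnC subnK 1?ltnW // exprM MN1 expr1n.
Qed.

Lemma mulmx_supp_eq0P {R : pzRingType} {m n} (M : 'M[R]_(m, n))
    (Z : pred 'I_n) (B : pred 'I_m) :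
  (forall v : 'cV_n, (forall j, Z j -> v j 0 = 0) -> forall i, B i -> (M *m v) i 0 = 0)
  <-> (forall i j, B i -> ~~ Z j -> M i j = 0).
Proof.
split=> [Mv0 i j Bi Zj | M0 v v0 i Bi].
  have dj0 l : Z l -> (delta_mx j 0 : 'cV[R]_n) l 0 = 0.
    by rewrite mxE andbT; case: eqP => // -> /(negP Zj).
  by have := Mv0 _ dj0 i Bi; rewrite -colE mxE.
rewrite mxE big1 // => j _; have [Zj | /(M0 i j Bi) ->] := boolP (Z j).
  by rewrite v0 ?mulr0.
by rewrite mul0r.
Qed.

Definition partner (i : nat) : nat := ~~ odd i + i./2.*2.

Lemma half_partner i : (partner i)./2 = i./2.
Proof. exact: half_bit_double. Qed.

Lemma partnerK : involutive partner.
Proof. move=> i; rewrite /partner; lia. Qed.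

Lemma partner_spec i j : ((i./2 == j./2) && (i != j))%N = (j == partner i).
Proof. rewrite /partner; lia. Qed.

Lemma partner_ltn n i : (i < 2 * n)%N -> (partner i < 2 * n)%N.
Proof. rewrite /partner; lia. Qed.

Definition partner_ord {n} (i : 'I_(2 * n)) : 'I_(2 * n) :=
  Ordinal (@partner_ltn n i (ltn_ord i)).

Lemma partner_ordK {n} : involutive (@partner_ord n).
Proof. by move=> i; apply: val_inj; rewrite /= partnerK. Qed.

Section SymplecticForm.

Context {n : nat}.
Local Notation J := (symJ n).
Local Notation pa := (@partner_ord n).

Lemma symJE i j : J i j = (j == pa i)%:R.
Proof. by rewrite mxE partner_spec -[_ == _]/(j == pa i); case: (j == pa i). Qed.

Lemma mulJmxE m (A : 'M['F_2]_(2 * n, m)) i j : (J *m A) i j = A (pa i) j.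
Proof.
rewrite mxE (bigD1 (pa i)) //= big1 ?addr0 => [|l /negbTE pa_l]; rewrite symJE.
  by rewrite eqxx mul1r.
by rewrite pa_l mul0r.
Qed.

Lemma mulmxJE m (A : 'M['F_2]_(m, 2 * n)) i j : (A *m J) i j = A i (pa j).
Proof.
rewrite mxE (bigD1 (pa j)) //= big1 ?addr0 => [|l pa_l]; rewrite symJE.
  by rewrite partner_ordK eqxx mulr1.
by rewrite eq_sym (can2_eq partner_ordK partner_ordK) (negbTE pa_l) mulr0.
Qed.

Lemma conjJE (A : 'M['F_2]_(2 * n)) i j : (J *m A *m J) i j = A (pa i) (pa j).
Proof. by rewrite mulmxJE mulJmxE. Qed.

Lemma mulJJ : J *m J = 1%:M.
Proof.
apply/matrixP => i j; have := conjJE 1%:M i j; rewrite mulmx1 => ->.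
by rewrite !mxE (inj_eq (can_inj partner_ordK)).
Qed.

Lemma symplectic1 : symplectic (1%:M : 'M_(2 * n)).
Proof. by rewrite /symplectic trmx1 mul1mx mulmx1. Qed.

Lemma symplecticM {A B : 'M_(2 * n)} :
  symplectic A -> symplectic B -> symplectic (A *m B).
Proof.
rewrite /symplectic => sympA sympB.
by rewrite trmx_mul !mulmxA -(mulmxA A) -(mulmxA A) sympB.
Qed.

Lemma symplecticX {W : 'M_(2 * n)} t : symplectic W -> symplectic (W ^+ t).
Proof.
move=> sympW; elim: t => [|t IHt]; first exact: symplectic1.
by rewrite exprS -mulmxE; apply: symplecticM.
Qed.

Lemma symplectic_unitmx {W : 'M_(2 * n)} : symplectic W -> W \in unitmx.
Proof.
move=> sympW; case: (@mulmx1_unit _ _ W (J *m W^T *m J)) => //.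
by rewrite !mulmxA sympW mulJJ.
Qed.

Lemma symplectic_expr_inv {W : 'M_(2 * n)} {s t : nat} :
  symplectic W -> W ^+ (s + t) = 1 -> W ^+ s = J *m (W ^+ t)^T *m J.
Proof.
move=> sympW Wst1; have sympWt : symplectic (W ^+ t) := symplecticX t sympW.
rewrite -[W ^+ s]mulmx1 -mulJJ -{1}sympWt !mulmxA.
by rewrite mulmxE -exprD Wst1 -mulmxE mul1mx.
Qed.

End SymplecticForm.

Definition site_block_eq0 {R : pzRingType} {n : nat} (M : 'M[R]_(2 * n))
    (rows cols : pred nat) :=
  forall i j : 'I_(2 * n), rows i./2 -> cols j./2 -> M i j = 0.

Lemma symplectic_site_block_eq0_sym n (W : 'M['F_2]_(2 * n)) (P Q : pred nat) :
  symplectic W ->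
  (forall t, (0 < t)%N -> site_block_eq0 (W ^+ t) P Q) ->
  forall t, (0 < t)%N -> site_block_eq0 (W ^+ t) Q P.
Proof.
move=> sympW PQ0 t t_gt0 i j Qi Pj.
have [N N_gt0 WN1] := unitmx_finite_order (symplectic_unitmx sympW).
have [s s_gt0 Wst1] := finite_order_inv_expr t N_gt0 WN1.
rewrite (symplectic_expr_inv sympW Wst1) conjJE mxE.
by apply: PQ0; rewrite //= half_partner.
Qed.

Lemma act_powE n (W : 'M['F_2]_(2 * n)) t b : act_pow W t b = W ^+ t *m b.
Proof. exact: iter_mulmx. Qed.

Lemma left_wallE n a k W :
  left_wall n a k W <->
  forall t, (0 < t)%N ->
    site_block_eq0 (W ^+ t) [pred x | a + k <= x]%N [pred x | x < a]%N.
Proof.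
pose supp_eq0P t :=
  mulmx_supp_eq0P (W ^+ t) (fun j => a <= j./2)%N (fun i => a + k <= i./2)%N.
split=> wall t /wall{}wall.
  move=> i j Ri Lj; apply: (supp_eq0P t).1 Ri _; last by rewrite -ltnNge.
  by move=> v /wall v0 l Rl; rewrite -act_powE v0.
move=> l l0 i Ri; rewrite act_powE; apply: (supp_eq0P t).2 l0 i Ri => {}i j Ri.
by rewrite -ltnNge; apply: wall.
Qed.

Lemma right_wallE n a k W :
  right_wall n a k W <->
  forall t, (0 < t)%N ->
    site_block_eq0 (W ^+ t) [pred x | x < a]%N [pred x | a + k <= x]%N.
Proof.
pose supp_eq0P t :=
  mulmx_supp_eq0P (W ^+ t) (fun j => j./2 < a + k)%N (fun i => i./2 < a)%N.
split=> wall t /wall{}wall.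
  move=> i j Li Rj; apply: (supp_eq0P t).1 Li _; last by rewrite -leqNgt.
  by move=> v /wall v0 l Ll; rewrite -act_powE v0.
move=> r r0 i Li; rewrite act_powE; apply: (supp_eq0P t).2 r0 i Li => {}i j Li.
by rewrite -leqNgt; apply: wall.
Qed.

Theorem lemma3 (n a k : nat) (W : 'M['F_2]_(2 * n)) :
  (3 <= n)%N -> (1 <= a)%N -> (1 <= k)%N -> (a + k < n)%N ->
  symplectic W ->
  (left_wall n a k W <-> right_wall n a k W).
Proof.
move=> _ _ _ _ sympW; rewrite left_wallE right_wallE.
by split; apply: symplectic_site_block_eq0_sym.
Qed.
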